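(* Let $\phi$ be an LTL formula that is satisfiable. Then every finished tableau for $\phi$ is successful, i.e. it has at least one ticked leaf. This holds regardless of the order in which leaves are chosen for extension, regardless of which applicable static rule is used at each step, and regardless of which pivot formula it is applied to.
   Context: LTL formulas over a countable set $AP$ of atoms are built from atoms $p\in AP$ and the constant $\top$ using $\neg\alpha$, $\alpha\wedge\beta$, $X\alpha$ and $\alpha U\beta$. We write $\bot$ for $\neg\top$. A structure is a triple $(S,R,g)$ where $S$ is a finite set, $R\subseteq S\times S$ is serial (every state has an $R$-successor), and $g:S\to 2^{AP}$. A fullpath is a sequence $\sigma=\langle s_0,s_1,\dots\rangle$ with $(s_i,s_{i+1})\in R$ for all $i$. We write $\sigma_i=s_i$ and $\sigma_{\ge j}=\langle s_j,s_{j+1},\dots\rangle$. Truth is defined as follows: - $\sigma\models p$ iff $p\in g(\sigma_0)$; - $\sigma\models\top$ always; - $\neg$ and $\wedge$ are classical; - $\sigma\models X\alpha$ iff $\sigma_{\ge1}\models\alpha$; - $\sigma\models\alpha U\beta$ iff there is $i\ge0$ with $\sigma_{\ge i}\models\beta$ and $\sigma_{\ge j}\models\alpha$ for all $0\le j<i$. A formula is satisfiable iff it is true on some fullpath of some structure. Tableau. A tableau for $\phi$ is a finite rooted tree. Each node $u$ carries a finite set of formulas $\Gamma_u$ (its label), and the root is labelled $\{\phi\}$. We write $u<v$ when $u$ is a proper ancestor of $v$ and $u\le v$ when it is an ancestor or equal. A formula is elementary if it is an atom, a negated atom, or of the form $X\alpha$ or $\neg X\alpha$. A label is poised if it is nonempty,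 contains no pair $\alpha,\neg\alpha$, and all its formulas are elementary. An $X$-eventuality of a poised label is a member of the form $X(\alpha U\beta)$. Static rules are written ''parent label / children'', where $\{\chi\}\mathbin{\dot\cup}\Delta$ means $\chi\notin\Delta$: - EMPTY: $\{\}$ / tick. - CONTRADICTION: $\{\alpha,\neg\alpha\}\mathbin{\dot\cup}\Delta$ / cross. - $\neg\top$: $\{\neg\top\}\mathbin{\dot\cup}\Delta$ / cross. - $\top$: $\{\top\}\mathbin{\dot\cup}\Delta$ / $\Delta$. - $\wedge$: $\{\alpha\wedge\beta\}\mathbin{\dot\cup}\Delta$ / $\Delta\cup\{\alpha,\beta\}$. - $U$: $\{\alpha U\beta\}\mathbin{\dot\cup}\Delta$ / two children $\Delta\cup\{\beta\}$ and $\Delta\cup\{\alpha,X(\alpha U\beta)\}$. - $\neg\neg$: $\{\neg\neg\alpha\}\mathbin{\dot\cup}\Delta$ / $\Delta\cup\{\alpha\}$. - $\neg\wedge$: $\{\neg(\alpha\wedge\beta)\}\mathbin{\dot\cup}\Delta$ / two children $\Delta\cup\{\neg\alpha\}$ and $\Delta\cup\{\neg\beta\}$. - $\neg U$: $\{\neg(\alpha U\beta)\}\mathbin{\dot\cup}\Delta$ / two children $\Delta\cup\{\neg\alpha,\neg\beta\}$ and $\Delta\cup\{\neg\beta,X\neg(\alpha U\beta)\}$. Non-static rules apply only to a leaf $v$ with poised label. The first applicable one in the following list is used. - LOOP: if some $u<v$ has poised $\Gamma_u\supseteq\Gamma_v$, and for every $X(\alpha U\beta)\in\Gamma_u$ there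 is $w$ with $u<w\le v$ and $\beta\in\Gamma_w$, then $v$ is ticked. - PRUNE: if $u<v'<v$ all have the same poised label $\Gamma$, and for every $X(\alpha U\beta)\in\Gamma$, whenever some $x$ with $v'<x\le v$ has $\beta\in\Gamma_x$ there is $y$ with $u<y\le v'$ and $\beta\in\Gamma_y$, then $v$ is crossed. - PRUNE$_0$: if $u<v$ share the same poised label $\Gamma$, $\Gamma$ contains at least one $X$-eventuality, and for no $X(\alpha U\beta)\in\Gamma$ is there $x$ with $u<x\le v$ and $\beta\in\Gamma_x$, then $v$ is crossed. - TRANSITION: otherwise $v$ gets one child labelled $\{\alpha: X\alpha\in\Gamma_v\}\cup\{\neg\alpha:\neg X\alpha\in\Gamma_v\}$. A tableau is constructed from the root by repeatedly choosing any leaf that is neither ticked nor crossed and applying an applicable rule. For non-poised labels this means any applicable static rule to any suitable pivot formula. A tableau is finished if every leaf is ticked or crossed, and successful if some leaf is ticked. *)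

From Stdlib Require Import List Arith Lia.
Import ListNotations.

Inductive form : Type :=
| Atom : nat -> form
| Top : form
| Neg : form -> form
| And : form -> form -> form
| Next : form -> form
| Until : form -> form -> form.

Definition form_eq_dec : forall x y : form, {x = y} + {x <> y}.
Proof. decide equality; apply Nat.eq_dec. Defined.

Definition suffix {St : Type} (j : nat) (sigma : nat -> St) : nat -> St :=
  fun i => sigma (j + i).

Fixpoint sat {St : Type} (g : St -> nat -> Prop) (sigma : nat -> St) (f : form)
  : Prop :=
  match f with
  | Atom p => g (sigma 0) p
  | Top => True
  | Neg a => ~ sat g sigma a
  | And a b => sat g sigma a /\ sat g sigma b
  | Next a => sat g (suffix 1 sigma) a
  | Until a b =>
      exists i, sat g (suffix i sigma) b /\
                forall j, j < i -> sat g (suffix j sigma) a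
  end.

Definition finite_type (St : Type) : Prop := exists l : list St, forall s, In s l.
Definition serial {St : Type} (R : St -> St -> Prop) : Prop :=
  forall s, exists t, R s t.
Definition fullpath {St : Type} (R : St -> St -> Prop) (sigma : nat -> St) : Prop :=
  forall i, R (sigma i) (sigma (S i)).

Definition satisfiable (phi : form) : Prop :=
  exists (St : Type) (R : St -> St -> Prop) (g : St -> nat -> Prop)
         (sigma : nat -> St),
    finite_type St /\ serial R /\ fullpath R sigma /\ sat g sigma phi.

(* A label is a finite set of formulas, represented by a list; set-level
   notions (membership, inclusion, equality of labels) are taken up to
   membership. *)
Definition label := list form.

Definition same_label (G1 G2 : label) : Prop := forall x, In x G1 <-> In x G2.

Definition elementary (f : form) : Prop :=
  match f with
  | Atom _ => True
  | Neg (Atom _) => True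
  | Next _ => True
  | Neg (Next _) => True
  | _ => False
  end.

Definition poised (G : label) : Prop :=
  G <> [] /\
  (forall a, In a G -> ~ In (Neg a) G) /\
  (forall f, In f G -> elementary f).

(* Delta, where G = {chi} disjoint-union Delta *)
Definition minus (G : label) (chi : form) : label := remove form_eq_dec chi G.

Inductive static_result : Type :=
| SRtick : static_result
| SRcross : static_result
| SRchildren : list label -> static_result.

Inductive static_rule (G : label) : static_result -> Prop :=
| st_empty : G = [] -> static_rule G SRtick
| st_contradiction : forall a, In a G -> In (Neg a) G -> static_rule G SRcross
| st_negtop : In (Neg Top) G -> static_rule G SRcross
| st_top : In Top G -> static_rule G (SRchildren [minus G Top])
| st_and : forall a b, In (And a b) G ->
    static_rule G (SRchildren [minus G (And a b) ++ [a; b]])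
| st_until : forall a b, In (Until a b) G ->
    static_rule G (SRchildren [minus G (Until a b) ++ [b];
                               minus G (Until a b) ++ [a; Next (Until a b)]])
| st_negneg : forall a, In (Neg (Neg a)) G ->
    static_rule G (SRchildren [minus G (Neg (Neg a)) ++ [a]])
| st_negand : forall a b, In (Neg (And a b)) G ->
    static_rule G (SRchildren [minus G (Neg (And a b)) ++ [Neg a];
                               minus G (Neg (And a b)) ++ [Neg b]])
| st_neguntil : forall a b, In (Neg (Until a b)) G ->
    static_rule G (SRchildren [minus G (Neg (Until a b)) ++ [Neg a; Neg b];
                               minus G (Neg (Until a b)) ++
                                 [Neg b; Next (Neg (Until a b))]]).

Definition next_label (G : label) : label :=
  flat_map (fun f => match f with
                     | Next a => [a]
                     | Neg (Next a) => [Neg a]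
                     | _ => []
                     end) G.

(* ---------- Non-static rule conditions ----------
   [anc] lists the labels of the proper ancestors of the leaf v, root first;
   [G] is the label of v.  The branch is [anc ++ [G]], v has index
   [length anc]; node at index i is an ancestor of the node at index j iff
   i < j. *)

Definition nodeL (anc : list label) (G : label) (i : nat) : label :=
  nth i (anc ++ [G]) [].

Definition loop_cond (anc : list label) (G : label) : Prop :=
  exists i, i < length anc /\
    poised (nodeL anc G i) /\
    incl G (nodeL anc G i) /\
    forall a b, In (Next (Until a b)) (nodeL anc G i) ->
      exists w, i < w <= length anc /\ In b (nodeL anc G w).

Definition prune_cond (anc : list label) (G : label) : Prop :=
  exists i j, i < j < length anc /\
    same_label (nodeL anc G i) G /\ same_label (nodeL anc G j) G /\ poised G /\
    forall a b, In (Next (Until a b)) G ->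
      (exists x, j < x <= length anc /\ In b (nodeL anc G x)) ->
      exists y, i < y <= j /\ In b (nodeL anc G y).

Definition prune0_cond (anc : list label) (G : label) : Prop :=
  exists i, i < length anc /\
    same_label (nodeL anc G i) G /\ poised G /\
    (exists a b, In (Next (Until a b)) G) /\
    ~ (exists a b x, In (Next (Until a b)) G /\ i < x <= length anc /\
                     In b (nodeL anc G x)).

(* A finite rooted tree whose leaves are all ticked or crossed
   (i.e. a finished tree); inner nodes have had a rule applied. *)
Inductive tableau : Type :=
| Ticked : label -> tableau
| Crossed : label -> tableau
| Inner : label -> list tableau -> tableau.

Definition tlabel (t : tableau) : label :=
  match t with Ticked G | Crossed G | Inner G _ => G end.

(* [valid anc t]: every node of t was produced by a correct rule
   application, where [anc] are the labels of the ancestors of the root of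
   [t] (root first). *)
Inductive valid : list label -> tableau -> Prop :=
| v_static_tick : forall anc G,
    static_rule G SRtick -> valid anc (Ticked G)
| v_static_cross : forall anc G,
    static_rule G SRcross -> valid anc (Crossed G)
| v_static_children : forall anc G cs,
    static_rule G (SRchildren (map tlabel cs)) ->
    (forall c, In c cs -> valid (anc ++ [G]) c) ->
    valid anc (Inner G cs)
| v_loop : forall anc G,
    poised G -> loop_cond anc G -> valid anc (Ticked G)
| v_prune : forall anc G,
    poised G -> ~ loop_cond anc G -> prune_cond anc G -> valid anc (Crossed G)
| v_prune0 : forall anc G,
    poised G -> ~ loop_cond anc G -> ~ prune_cond anc G -> prune0_cond anc G ->
    valid anc (Crossed G)
| v_transition : forall anc G c,
    poised G -> ~ loop_cond anc G -> ~ prune_cond anc G -> ~ prune0_cond anc G ->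
    tlabel c = next_label G ->
    valid (anc ++ [G]) c ->
    valid anc (Inner G [c]).

Definition finished_tableau (phi : form) (t : tableau) : Prop :=
  valid [] t /\ tlabel t = [phi].

Inductive has_ticked_leaf : tableau -> Prop :=
| htl_leaf : forall G, has_ticked_leaf (Ticked G)
| htl_inner : forall G cs c, In c cs -> has_ticked_leaf c ->
    has_ticked_leaf (Inner G cs).

Definition successful (t : tableau) : Prop := has_ticked_leaf t.

From Stdlib Require Import List Arith Lia Classical.
Import ListNotations.

(* Fix a fullpath [sigma] on which [phi] holds and walk down the tableau from
   the root, attaching to each visited node a time at which its label holds on
   [sigma].  Static rules keep the time, and some child's label holds at it.
   At a TRANSITION node the time is first pushed forward as far as possible:
   to the last moment, before the oldest pending eventuality is due, at which
   the label still holds; then it advances by one.  Leaves crossed by static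
   rules have unsatisfiable labels.  PRUNE and PRUNE_0 only fire when a poised
   label repeats on the branch while its oldest eventuality is still open; but
   then the label holds again strictly before that eventuality is due,
   contradicting the maximal choice of the earlier time.  Hence the walk ends
   at a ticked leaf. *)

Lemma sat_ext {St : Type} (g : St -> nat -> Prop) (f : form) :
  forall s1 s2 : nat -> St, (forall i, s1 i = s2 i) -> sat g s1 f <-> sat g s2 f.
Proof.
  induction f as [p| |f IH|f1 IH1 f2 IH2|f IH|f1 IH1 f2 IH2]; intros s1 s2 E; simpl.
  - rewrite E; reflexivity.
  - reflexivity.
  - rewrite (IH s1 s2 E); reflexivity.
  - rewrite (IH1 s1 s2 E), (IH2 s1 s2 E); reflexivity.
  - apply IH; intro i; apply E.
  - assert (E1 : forall i, sat g (suffix i s1) f1 <-> sat g (suffix i s2) f1)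
      by (intro i; apply IH1; intro k; apply E).
    assert (E2 : forall i, sat g (suffix i s1) f2 <-> sat g (suffix i s2) f2)
      by (intro i; apply IH2; intro k; apply E).
    setoid_rewrite E1; setoid_rewrite E2; reflexivity.
Qed.

Lemma exists_least (P : nat -> Prop) :
  (exists n, P n) -> exists m, P m /\ forall k, k < m -> ~ P k.
Proof.
  intros [n Pn]; induction n as [n IH] using lt_wf_ind.
  destruct (classic (exists k, k < n /\ P k)) as [[k [Hk Pk]]|Hno].
  - exact (IH k Hk Pk).
  - exists n; split; [exact Pn|]. intros k Hk Pk; apply Hno; eauto.
Qed.

Lemma exists_greatest_below (P : nat -> Prop) (B k : nat) :
  P k -> k < B -> exists d, P d /\ d < B /\ forall m, d < m < B -> ~ P m.
Proof.
  induction B as [|B IH]; intros Pk Hk; [lia|].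
  destruct (classic (P B)) as [PB|PB].
  - exists B; split; [exact PB|split; [lia|intros; lia]].
  - destruct (IH Pk ltac:(destruct (Nat.eq_dec k B); subst; [contradiction|lia]))
      as [d [Pd [Hd Hmax]]].
    exists d; split; [exact Pd|split; [lia|]].
    intros m Hm; destruct (Nat.eq_dec m B) as [->|]; [exact PB|apply Hmax; lia].
Qed.

Lemma same_label_sym (G1 G2 : label) : same_label G1 G2 -> same_label G2 G1.
Proof. intros H x; symmetry; apply H. Qed.

Lemma poised_same_label (G1 G2 : label) : same_label G1 G2 -> poised G1 -> poised G2.
Proof.
  intros HS [Hne [Hcon Hel]]; split; [|split].
  - destruct G1 as [|x G1]; [contradiction|]. intros ->; apply (HS x); left; reflexivity.
  - intros a Ha Hn; apply (Hcon a); apply HS; assumption.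
  - intros f Hf; apply Hel, HS, Hf.
Qed.

Lemma poised_not_Until (G : label) a b : poised G -> ~ In (Until a b) G.
Proof. intros [_ [_ Hel]] Hin; exact (Hel _ Hin). Qed.

Lemma static_children_not_poised (G : label) ls :
  static_rule G (SRchildren ls) -> ~ poised G.
Proof.
  intros HR [_ [_ Hel]]; inversion HR; subst;
    match goal with H : In _ G |- _ => exact (Hel _ H) end.
Qed.

Lemma in_minus_app (G : label) chi extra x :
  In x G -> x <> chi -> In x (minus G chi ++ extra).
Proof. intros; apply in_or_app; left; apply in_in_remove; assumption. Qed.

Lemma in_next_label (G : label) f : In (Next f) G -> In f (next_label G).
Proof. intro H; apply in_flat_map; exists (Next f); simpl; auto. Qed.

Definition pending (G : label) (a b : form) : Prop :=
  In (Until a b) G \/ In (Next (Until a b)) G.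

Lemma pending_poised (G : label) a b :
  poised G -> pending G a b -> In (Next (Until a b)) G.
Proof. intros HP [H|H]; [exfalso; exact (poised_not_Until G a b HP H)|exact H]. Qed.

Lemma pending_minus_app (G : label) chi extra a b :
  pending G a b -> Until a b <> chi -> Next (Until a b) <> chi ->
  pending (minus G chi ++ extra) a b.
Proof. intros [H|H] E1 E2; [left|right]; apply in_minus_app; assumption. Qed.

Definition has_X_eventuality (G : label) : Prop :=
  exists a b, In (Next (Until a b)) G.

Section Model.
Variables (St : Type) (g : St -> nat -> Prop) (sigma : nat -> St).

Definition holds (c : nat) (f : form) : Prop := sat g (suffix c sigma) f.
Definition holds_all (c : nat) (G : label) : Prop := forall f, In f G -> holds c f.

Lemma holds_suffix c i f : sat g (suffix i (suffix c sigma)) f <-> holds (c + i) f.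
Proof. apply sat_ext; intro k; unfold suffix; f_equal; lia. Qed.

Lemma holds_Neg c f : holds c (Neg f) <-> ~ holds c f.
Proof. reflexivity. Qed.

Lemma holds_And c a b : holds c (And a b) <-> holds c a /\ holds c b.
Proof. reflexivity. Qed.

Lemma holds_Next c f : holds c (Next f) <-> holds (S c) f.
Proof. unfold holds at 1; simpl; rewrite holds_suffix, Nat.add_1_r; reflexivity. Qed.

Lemma holds_Until c a b :
  holds c (Until a b) <-> exists i, holds (c + i) b /\ forall j, j < i -> holds (c + j) a.
Proof. unfold holds at 1; simpl; setoid_rewrite holds_suffix; reflexivity. Qed.

Lemma holds_Until_unfold c a b :
  holds c (Until a b) <-> holds c b \/ holds c a /\ holds (S c) (Until a b).
Proof.
  rewrite !holds_Until; split.
  - intros [[|i] [Hb Ha]]; [left; rewrite Nat.add_0_r in Hb; exact Hb|right].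
    split; [specialize (Ha 0 ltac:(lia)); rewrite Nat.add_0_r in Ha; exact Ha|].
    exists i; split; [rewrite Nat.add_succ_comm; exact Hb|].
    intros j Hj; rewrite Nat.add_succ_comm; apply Ha; lia.
  - intros [Hb|[Ha [i [Hb Hai]]]].
    + exists 0; rewrite Nat.add_0_r; split; [exact Hb|intros; lia].
    + exists (S i); split; [rewrite <- Nat.add_succ_comm; exact Hb|].
      intros [|j] Hj; [rewrite Nat.add_0_r; exact Ha|].
      rewrite <- Nat.add_succ_comm; apply Hai; lia.
Qed.

Lemma holds_all_same_label c G1 G2 :
  same_label G1 G2 -> holds_all c G1 -> holds_all c G2.
Proof. intros HS H f Hf; apply H, HS, Hf. Qed.

Lemma holds_all_next_label c G : holds_all c G -> holds_all (S c) (next_label G).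
Proof.
  intros H x Hx; apply in_flat_map in Hx; destruct Hx as [f [Hf Hx]].
  destruct f as [| |f| |f|]; simpl in Hx; try contradiction.
  - destruct f; simpl in Hx; try contradiction; destruct Hx as [<-|[]].
    rewrite holds_Neg, <- holds_Next; exact (H _ Hf).
  - destruct Hx as [<-|[]]; apply holds_Next, H, Hf.
Qed.

Lemma static_cross_unsat c G : static_rule G SRcross -> ~ holds_all c G.
Proof.
  intros HR HS; inversion HR as [|a Ha Hna| | | | | | |]; subst.
  - exact (HS _ Hna (HS _ Ha)).
  - exact (HS _ H I).
Qed.

Lemma holds_all_minus_app c G chi extra :
  holds_all c G -> Forall (holds c) extra -> holds_all c (minus G chi ++ extra).
Proof.
  intros HG Hextra f Hf; rewrite Forall_forall in Hextra.
  apply in_app_or in Hf; destruct Hf as [Hf|Hf]; [|auto].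
  apply in_remove in Hf; apply HG, Hf.
Qed.

(* The last clause keeps an eventuality that is due at the current time from
   being postponed by a static rule. *)
Definition sound_child (c : nat) (G l : label) : Prop :=
  holds_all c l /\
  (forall a b, pending G a b -> ~ In b l -> pending l a b) /\
  (forall a b, In (Until a b) G -> holds c b -> In b l \/ In (Until a b) l).

Lemma sound_child_minus c G chi extra :
  holds_all c G -> (forall a b, Until a b <> chi /\ Next (Until a b) <> chi) ->
  Forall (holds c) extra -> sound_child c G (minus G chi ++ extra).
Proof.
  intros HG Hchi Hextra; split; [|split].
  - exact (holds_all_minus_app c G chi extra HG Hextra).
  - intros a b Hp _; apply pending_minus_app; [exact Hp|apply Hchi|apply Hchi].
  - intros a b Hu _; right; apply in_minus_app; [exact Hu|apply Hchi].
Qed.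

Lemma sound_child_Until c G a b :
  holds_all c G -> In (Until a b) G ->
  sound_child c G (minus G (Until a b) ++ [b]) \/
  sound_child c G (minus G (Until a b) ++ [a; Next (Until a b)]).
Proof.
  intros HG Hu.
  assert (Hrest : forall a0 b0 extra, Until a0 b0 <> Until a b ->
            pending G a0 b0 -> pending (minus G (Until a b) ++ extra) a0 b0)
    by (intros a0 b0 extra E Hp; apply pending_minus_app; [exact Hp|exact E|discriminate]).
  destruct (classic (holds c b)) as [Hb|Hnb]; [left|right]; split; [| split| |split].
  - apply holds_all_minus_app; [exact HG|constructor; [exact Hb|constructor]].
  - intros a0 b0 Hp Hb0; destruct (form_eq_dec (Until a0 b0) (Until a b)) as [E|E].
    + injection E as -> ->; exfalso; apply Hb0, in_or_app; right; left; reflexivity.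
    + exact (Hrest a0 b0 _ E Hp).
  - intros a0 b0 Hu0 _; destruct (form_eq_dec (Until a0 b0) (Until a b)) as [E|E].
    + injection E as -> ->; left; apply in_or_app; right; left; reflexivity.
    + right; apply in_minus_app; [exact Hu0|exact E].
  - destruct (proj1 (holds_Until_unfold c a b) (HG _ Hu)) as [Hb|[Ha Hnext]];
      [contradiction|].
    apply holds_all_minus_app; [exact HG|].
    constructor; [exact Ha|constructor; [apply holds_Next, Hnext|constructor]].
  - intros a0 b0 Hp _; destruct (form_eq_dec (Until a0 b0) (Until a b)) as [E|E].
    + injection E as -> ->; right; apply in_or_app; right; right; left; reflexivity.
    + exact (Hrest a0 b0 _ E Hp).
  - intros a0 b0 Hu0 Hb0; destruct (form_eq_dec (Until a0 b0) (Until a b)) as [E|E].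
    + injection E as -> ->; contradiction.
    + right; apply in_minus_app; [exact Hu0|exact E].
Qed.

Lemma static_rule_sound c G ls :
  static_rule G (SRchildren ls) -> holds_all c G -> exists l, In l ls /\ sound_child c G l.
Proof.
  intros HR HG.
  assert (Hchi : forall chi, (forall a b, Until a b <> chi /\ Next (Until a b) <> chi) ->
            forall extra, Forall (holds c) extra ->
            In (minus G chi ++ extra) ls -> exists l, In l ls /\ sound_child c G l)
    by (intros chi Hchi extra Hextra Hin; exists (minus G chi ++ extra);
        split; [exact Hin|apply sound_child_minus; assumption]).
  inversion HR as [| | |Hin|a b Hin|a b Hin|a Hin|a b Hin|a b Hin]; subst.
  - exists (minus G Top); split; [left; reflexivity|].
    rewrite <- (app_nil_r (minus G Top)).
    apply sound_child_minus; [exact HG|intros; split; discriminate|constructor].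
  - destruct (HG _ Hin) as [Ha Hb].
    apply (Hchi (And a b) ltac:(intros; split; discriminate) [a; b]); [|left; reflexivity].
    constructor; [exact Ha|constructor; [exact Hb|constructor]].
  - destruct (sound_child_Until c G a b HG Hin) as [H|H];
      eexists; split; [left; reflexivity|exact H|right; left; reflexivity|exact H].
  - apply (Hchi (Neg (Neg a)) ltac:(intros; split; discriminate) [a]); [|left; reflexivity].
    constructor; [apply NNPP, (HG _ Hin)|constructor].
  - assert (Hn := HG _ Hin); rewrite holds_Neg, holds_And in Hn.
    destruct (classic (holds c a)) as [Ha|Ha].
    + apply (Hchi (Neg (And a b)) ltac:(intros; split; discriminate) [Neg b]); [|right; left; reflexivity].
      constructor; [intro Hb; exact (Hn (conj Ha Hb))|constructor].
    + apply (Hchi (Neg (And a b)) ltac:(intros; split; discriminate) [Neg a]); [|left; reflexivity].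
      constructor; [exact Ha|constructor].
  - assert (Hn := HG _ Hin); rewrite holds_Neg, holds_Until_unfold in Hn.
    destruct (classic (holds c a)) as [Ha|Ha].
    + apply (Hchi (Neg (Until a b)) ltac:(intros; split; discriminate) [Neg b; Next (Neg (Until a b))]);
        [|right; left; reflexivity].
      constructor; [intro Hb; exact (Hn (or_introl Hb))|constructor; [|constructor]].
      apply holds_Next; intro Hu; exact (Hn (or_intror (conj Ha Hu))).
    + apply (Hchi (Neg (Until a b)) ltac:(intros; split; discriminate) [Neg a; Neg b]); [|left; reflexivity].
      constructor; [exact Ha|constructor; [intro Hb; exact (Hn (or_introl Hb))|constructor]].
Qed.


Section Branch.
Variable L : nat -> label.

Definition pending_since (a b : form) (y x : nat) : Prop :=
  y <= x /\ (forall z, y <= z <= x -> pending (L z) a b) /\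
  (forall z, y < z <= x -> ~ In b (L z)).

Definition loops_back (n : nat) : Prop :=
  exists i, i < n /\ poised (L i) /\ incl (L n) (L i) /\
    forall a b, In (Next (Until a b)) (L i) -> exists w, i < w <= n /\ In b (L w).

Definition prunes (n : nat) : Prop :=
  exists i j, i < j < n /\
    same_label (L i) (L n) /\ same_label (L j) (L n) /\ poised (L n) /\
    forall a b, In (Next (Until a b)) (L n) ->
      (exists x, j < x <= n /\ In b (L x)) ->
      exists y, i < y <= j /\ In b (L y).

Definition prunes0 (n : nat) : Prop :=
  exists i, i < n /\ same_label (L i) (L n) /\ poised (L n) /\
    (exists a b, In (Next (Until a b)) (L n)) /\
    ~ (exists a b x, In (Next (Until a b)) (L n) /\ i < x <= n /\ In b (L x)).

(* [cz] is the time of node [z]; [(a, b)] is its oldest pending eventuality,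
   due at time [T]. *)
Definition scheduled (z cz : nat) (a b : form) (y T : nat) : Prop :=
  In (Next (Until a b)) (L z) /\ pending_since a b y z /\
  (forall a' b' y', y' < y -> ~ pending_since a' b' y' z) /\
  cz < T /\ holds T b /\ (forall m, cz < m < T -> ~ holds_all m (L z)).

(* Node [i] of the branch [L 0, ..., L n] is visited at time [C i]. *)
Record branch_inv (C : nat -> nat) (n : nat) : Prop := {
  inv_holds : holds_all (C n) (L n);
  inv_time : forall z, z < n -> poised (L z) -> C z < C n;
  inv_pending : forall z a b, z < n -> pending (L z) a b -> ~ In b (L (S z)) ->
    pending (L (S z)) a b;
  inv_no_loop : forall z, z < n -> poised (L z) -> ~ loops_back z;
  inv_scheduled : forall z, z < n -> poised (L z) -> has_X_eventuality (L z) ->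
    exists a b y T, scheduled z (C z) a b y T /\
      ((forall w, z < w <= n -> ~ In b (L w)) ->
       C n < T \/ (C n = T /\ In (Until a b) (L n)))
}.

Lemma pending_persists n z x a b :
  (forall z a b, z < n -> pending (L z) a b -> ~ In b (L (S z)) -> pending (L (S z)) a b) ->
  x <= n -> pending (L z) a b -> (forall w, z < w <= x -> ~ In b (L w)) ->
  forall w, z <= w <= x -> pending (L w) a b.
Proof.
  intros Hstep Hx Hz Hb w [Hzw Hwx]; induction Hzw as [|w Hzw IH]; [exact Hz|].
  apply Hstep; [lia|apply IH; lia|apply Hb; lia].
Qed.

Lemma pending_since_restrict a b y x z :
  pending_since a b y x -> y <= z <= x -> pending_since a b y z.
Proof.
  intros [_ [Hp Hb]] Hz; split; [lia|split]; intros; [apply Hp|apply Hb]; lia.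
Qed.

Lemma scheduled_pending_since C n z cz a b y T :
  branch_inv C n -> z < n -> scheduled z cz a b y T ->
  (forall w, z < w <= n -> ~ In b (L w)) -> pending_since a b y n.
Proof.
  intros HI Hz [HN [[Hyz [Hp Hb]] _]] Hopen; split; [lia|split].
  - intros w Hw; destruct (le_lt_dec w z); [apply Hp; lia|].
    apply (pending_persists n z n a b (inv_pending _ _ HI)); [lia|right; exact HN|exact Hopen|lia].
  - intros w Hw; destruct (le_lt_dec w z); [apply Hb; lia|apply Hopen; lia].
Qed.

Lemma scheduled_open_pending C n z cz a b y T :
  branch_inv C n -> z < n -> scheduled z cz a b y T ->
  (forall w, z < w <= n -> ~ In b (L w)) -> pending (L n) a b.
Proof.
  intros HI Hz Hs Hopen.
  destruct (scheduled_pending_since C n z cz a b y T HI Hz Hs Hopen) as [Hyn [Hp _]].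
  apply Hp; lia.
Qed.

(* The time of a poised node is pushed to the last moment before the oldest
   pending eventuality is due at which its label still holds. *)
Lemma time_jump C n : branch_inv C n -> poised (L n) ->
  exists c', C n <= c' /\ holds_all c' (L n) /\
    (forall z a b y T, z < n -> scheduled z (C z) a b y T ->
       (forall w, z < w <= n -> ~ In b (L w)) -> C n < T -> c' < T) /\
    (has_X_eventuality (L n) -> exists a b y T, scheduled n c' a b y T).
Proof.
  intros HI HP.
  destruct (classic (has_X_eventuality (L n))) as [Hev|Hnev].
  2:{ exists (C n); split; [lia|split; [exact (inv_holds _ _ HI)|split; [|contradiction]]].
      intros z a b y T Hz Hs Hopen _; exfalso; apply Hnev; exists a, b.
      exact (pending_poised _ a b HP (scheduled_open_pending C n z _ a b y T HI Hz Hs Hopen)). }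
  destruct (exists_least (fun y => exists a b, pending_since a b y n))
    as [y0 [[a0 [b0 Hrun0]] Hleast]].
  { destruct Hev as [a [b Hab]]; exists n, a, b; split; [lia|split].
    - intros z Hz; replace z with n by lia; right; exact Hab.
    - intros; lia. }
  destruct (exists_least (fun m => C n < m /\ exists a b, pending_since a b y0 n /\ holds m b))
    as [T [[HT [a1 [b1 [Hrun1 Hb1]]]] HTleast]].
  { assert (HN0 : In (Next (Until a0 b0)) (L n))
      by (apply pending_poised; [exact HP|apply (proj1 (proj2 Hrun0)); destruct Hrun0; lia]).
    assert (H := inv_holds _ _ HI _ HN0); rewrite holds_Next, holds_Until in H.
    destruct H as [i [Hi _]]; exists (S (C n) + i); split; [lia|exists a0, b0; auto]. }
  destruct (exists_greatest_below (fun d => C n <= d /\ holds_all d (L n)) T (C n))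
    as [c' [[Hc' Hholds] [HcT Hmax]]]; [split; [lia|exact (inv_holds _ _ HI)]|lia|].
  exists c'; split; [exact Hc'|split; [exact Hholds|split]].
  - intros z a b y Tz Hz Hs Hopen HTz.
    assert (Hrun : pending_since a b y n)
      by exact (scheduled_pending_since C n z (C z) a b y Tz HI Hz Hs Hopen).
    assert (y = y0).
    { destruct Hs as [_ [[Hyz _] [Holdest _]]].
      destruct (lt_eq_lt_dec y y0) as [[Hlt|Heq]|Hgt]; [|exact Heq|].
      - exfalso; exact (Hleast y Hlt (ex_intro _ a (ex_intro _ b Hrun))).
      - exfalso; apply (Holdest a0 b0 y0 Hgt).
        apply (pending_since_restrict a0 b0 y0 n z Hrun0); lia. }
    subst y.
    destruct (le_lt_dec T Tz) as [|HlT]; [lia|].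
    exfalso; apply (HTleast Tz HlT); split; [exact HTz|exists a, b].
    split; [exact Hrun|apply Hs].
  - intros _; exists a1, b1, y0, T.
    split; [apply pending_poised; [exact HP|apply (proj1 (proj2 Hrun1)); destruct Hrun1; lia]|].
    split; [exact Hrun1|split; [|split; [lia|split; [exact Hb1|]]]].
    + intros a' b' y' Hy' Hrun; exact (Hleast y' Hy' (ex_intro _ a' (ex_intro _ b' Hrun))).
    + intros m Hm Hholdsm; apply (Hmax m); [lia|split; [lia|exact Hholdsm]].
Qed.

(* A label repeated with its scheduled eventuality still open would hold again
   strictly before the eventuality is due, against the choice of times. *)
Lemma scheduled_fulfilled C n z a b y T :
  branch_inv C n -> poised (L n) -> z < n -> same_label (L z) (L n) ->
  scheduled z (C z) a b y T ->
  ((forall w, z < w <= n -> ~ In b (L w)) -> C n < T \/ (C n = T /\ In (Until a b) (L n))) ->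
  exists w, z < w <= n /\ In b (L w).
Proof.
  intros HI HP Hz HS Hs Hdue.
  apply NNPP; intro Hopen.
  destruct (Hdue ltac:(intros w Hw Hb; apply Hopen; eauto)) as [Hlt|[_ Hu]].
  - assert (HPz : poised (L z)) by exact (poised_same_label _ _ (same_label_sym _ _ HS) HP).
    destruct Hs as [_ [_ [_ [_ [_ Hmax]]]]].
    apply (Hmax (C n)); [split; [exact (inv_time _ _ HI z Hz HPz)|exact Hlt]|].
    exact (holds_all_same_label _ _ _ (same_label_sym _ _ HS) (inv_holds _ _ HI)).
  - exact (poised_not_Until _ a b HP Hu).
Qed.

Lemma branch_inv_not_prunes C n : branch_inv C n -> ~ prunes n.
Proof.
  intros HI [i [j [Hij [Hi [Hj [HP Hcond]]]]]].
  assert (HPi : poised (L i)) by exact (poised_same_label _ _ (same_label_sym _ _ Hi) HP).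
  assert (HPj : poised (L j)) by exact (poised_same_label _ _ (same_label_sym _ _ Hj) HP).
  (* Otherwise node j would have been ticked by LOOP back to node i. *)
  assert (Hopen : exists a b, In (Next (Until a b)) (L i) /\ forall w, i < w <= j -> ~ In b (L w)).
  { apply NNPP; intro Hall; apply (inv_no_loop _ _ HI j ltac:(lia) HPj).
    exists i; split; [lia|split; [exact HPi|split]].
    - intros x Hx; apply Hi, Hj, Hx.
    - intros a b HN; apply NNPP; intro Hno; apply Hall; exists a, b; split; [exact HN|].
      intros w Hw Hb; apply Hno; eauto. }
  destruct Hopen as [a [b [HN Hopen]]].
  assert (Hev : has_X_eventuality (L j)) by (exists a, b; apply Hj, Hi, HN).
  destruct (inv_scheduled _ _ HI j ltac:(lia) HPj Hev) as [aj [bj [yj [Tj [Hs Hdue]]]]].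
  assert (Hyj : yj <= i).
  { destruct (le_lt_dec yj i) as [|Hlt]; [assumption|exfalso].
    destruct Hs as [_ [_ [Holdest _]]]; apply (Holdest a b i Hlt).
    split; [lia|split; [|exact Hopen]].
    apply (pending_persists n i j a b (inv_pending _ _ HI)); [lia|right; exact HN|exact Hopen]. }
  destruct (scheduled_fulfilled C n j aj bj yj Tj HI HP ltac:(lia) Hj Hs Hdue) as [x [Hx Hbx]].
  destruct Hs as [HNj [[_ [_ Hnob]] _]].
  destruct (Hcond aj bj (proj1 (Hj _) HNj) (ex_intro _ x (conj Hx Hbx))) as [w [Hw Hbw]].
  exact (Hnob w ltac:(lia) Hbw).
Qed.

Lemma branch_inv_not_prunes0 C n : branch_inv C n -> ~ prunes0 n.
Proof.
  intros HI [i [Hi [HS [HP [[a [b HN]] Hno]]]]].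
  assert (HPi : poised (L i)) by exact (poised_same_label _ _ (same_label_sym _ _ HS) HP).
  assert (Hev : has_X_eventuality (L i)) by (exists a, b; apply HS, HN).
  destruct (inv_scheduled _ _ HI i Hi HPi Hev) as [ai [bi [yi [Ti [Hs Hdue]]]]].
  destruct (scheduled_fulfilled C n i ai bi yi Ti HI HP Hi HS Hs Hdue) as [x [Hx Hbx]].
  apply Hno; exists ai, bi, x; split; [apply HS; apply Hs|split; assumption].
Qed.

End Branch.


Section Agree.
Variables (L L' : nat -> label) (n : nat).
Hypothesis agree : forall i, i <= n -> L' i = L i.

Lemma pending_since_agree a b y x :
  x <= n -> pending_since L' a b y x <-> pending_since L a b y x.
Proof.
  intro Hx; unfold pending_since.
  split; intros [Hyx [Hp Hb]]; (split; [exact Hyx|split]); intros z Hz;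
    [rewrite <- agree by lia; apply Hp
    |rewrite <- agree by lia; apply Hb
    |rewrite agree by lia; apply Hp
    |rewrite agree by lia; apply Hb]; exact Hz.
Qed.

Lemma loops_back_agree z : z <= n -> loops_back L' z <-> loops_back L z.
Proof.
  intro Hz; unfold loops_back.
  split; intros [i [Hi [HP [Hincl Hful]]]]; exists i; split; [exact Hi| |exact Hi|].
  - rewrite <- (agree i), <- (agree z) by lia; split; [exact HP|split; [exact Hincl|]].
    intros a b HN; destruct (Hful a b HN) as [w [Hw Hb]].
    exists w; split; [exact Hw|rewrite <- agree by lia; exact Hb].
  - rewrite (agree i), (agree z) by lia; split; [exact HP|split; [exact Hincl|]].
    intros a b HN; destruct (Hful a b HN) as [w [Hw Hb]].
    exists w; split; [exact Hw|rewrite agree by lia; exact Hb].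
Qed.

Lemma scheduled_agree z cz a b y T :
  z <= n -> scheduled L' z cz a b y T <-> scheduled L z cz a b y T.
Proof.
  intro Hz; unfold scheduled; rewrite (agree z), pending_since_agree by lia.
  split; intros [HN [Hrun [Holdest Hrest]]];
    (split; [exact HN|split; [exact Hrun|split; [|exact Hrest]]]);
    intros a' b' y' Hy' Hrun'; apply (Holdest a' b' y' Hy');
    [rewrite pending_since_agree by lia|rewrite <- pending_since_agree by lia]; exact Hrun'.
Qed.

End Agree.

(* The times of the branch extended by one node: the current node is revisited
   at time [cn] and the new node is visited at time [cS]. *)
Definition retime (C : nat -> nat) (n cn cS : nat) (i : nat) : nat :=
  if i <? n then C i else if i =? n then cn else cS.

Lemma retime_lt C n cn cS i : i < n -> retime C n cn cS i = C i.
Proof. intro H; unfold retime; rewrite (proj2 (Nat.ltb_lt _ _) H); reflexivity. Qed.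

Lemma retime_cur C n cn cS : retime C n cn cS n = cn.
Proof. unfold retime; rewrite Nat.ltb_irrefl, Nat.eqb_refl; reflexivity. Qed.

Lemma retime_new C n cn cS : retime C n cn cS (S n) = cS.
Proof.
  unfold retime; destruct (Nat.ltb_spec (S n) n); [lia|].
  destruct (Nat.eqb_spec (S n) n); [lia|reflexivity].
Qed.

Lemma branch_inv_static L C n ls :
  branch_inv L C n -> static_rule (L n) (SRchildren ls) ->
  exists l, In l ls /\ forall L', (forall i, i <= n -> L' i = L i) -> L' (S n) = l ->
    branch_inv L' (retime C n (C n) (C n)) (S n).
Proof.
  intros [Hholds Htime Hstep Hnoloop Hsched] HR.
  destruct (static_rule_sound (C n) (L n) ls HR Hholds) as [l [Hl [Hlholds [Hlpend Hlful]]]].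
  assert (HnP := static_children_not_poised _ _ HR).
  exists l; split; [exact Hl|]; intros L' agree Hnew.
  assert (Hcur : forall z, z < S n -> poised (L' z) -> z < n /\ poised (L z)).
  { intros z Hz HPz; rewrite agree in HPz by lia.
    destruct (Nat.eq_dec z n) as [->|]; [contradiction|split; [lia|exact HPz]]. }
  split; rewrite ?retime_new, ?Hnew.
  - exact Hlholds.
  - intros z Hz HPz; destruct (Hcur z Hz HPz) as [Hzn HPz'].
    rewrite retime_lt by exact Hzn; exact (Htime z Hzn HPz').
  - intros z a b Hz Hp Hb; rewrite agree in Hp by lia.
    destruct (Nat.eq_dec z n) as [->|]; [rewrite Hnew in *; exact (Hlpend a b Hp Hb)|].
    rewrite agree in * by lia; exact (Hstep z a b ltac:(lia) Hp Hb).
  - intros z Hz HPz; destruct (Hcur z Hz HPz) as [Hzn HPz'].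
    rewrite loops_back_agree with (L := L) (n := n) by (assumption || lia).
    exact (Hnoloop z Hzn HPz').
  - intros z Hz HPz Hev; destruct (Hcur z Hz HPz) as [Hzn HPz'].
    rewrite agree in Hev by lia.
    destruct (Hsched z Hzn HPz' Hev) as [a [b [y [T [Hs Hdue]]]]].
    exists a, b, y, T; rewrite retime_lt by exact Hzn.
    split; [rewrite scheduled_agree with (L := L) (n := n) by (assumption || lia); exact Hs|].
    intros Hopen.
    destruct (Hdue ltac:(intros w Hw; rewrite <- agree by lia; apply Hopen; lia))
      as [Hlt|[Heq Hu]]; [left; exact Hlt|right; split; [exact Heq|]].
    destruct Hs as [_ [_ [_ [_ [HbT _]]]]]; subst T.
    destruct (Hlful a b Hu HbT) as [Hb|Hb]; [|exact Hb].
    exfalso; apply (Hopen (S n)); [lia|rewrite Hnew; exact Hb].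
Qed.

Lemma branch_inv_transition L C n L' :
  branch_inv L C n -> poised (L n) -> ~ loops_back L n ->
  (forall i, i <= n -> L' i = L i) -> L' (S n) = next_label (L n) ->
  exists C', branch_inv L' C' (S n).
Proof.
  intros HI HP Hnl agree Hnew.
  destruct (time_jump L C n HI HP) as [c' [Hc' [Hholds [Hbefore Hsched_n]]]].
  pose proof HI as [_ Htime Hstep Hnoloop Hsched].
  exists (retime C n c' (S c')).
  split; rewrite ?retime_new, ?Hnew.
  - exact (holds_all_next_label c' (L n) Hholds).
  - intros z Hz HPz; destruct (Nat.eq_dec z n) as [->|]; [rewrite retime_cur; lia|].
    rewrite agree in HPz by lia; rewrite retime_lt by lia.
    specialize (Htime z ltac:(lia) HPz); lia.
  - intros z a b Hz Hp Hb; rewrite agree in Hp by lia.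
    destruct (Nat.eq_dec z n) as [->|].
    + rewrite Hnew; left; apply in_next_label, pending_poised; assumption.
    + rewrite agree in * by lia; exact (Hstep z a b ltac:(lia) Hp Hb).
  - intros z Hz HPz; rewrite loops_back_agree with (L := L) (n := n) by (assumption || lia).
    destruct (Nat.eq_dec z n) as [->|]; [exact Hnl|].
    rewrite agree in HPz by lia; exact (Hnoloop z ltac:(lia) HPz).
  - intros z Hz HPz Hev; rewrite agree in HPz, Hev by lia.
    destruct (Nat.eq_dec z n) as [->|].
    + destruct (Hsched_n Hev) as [a [b [y [T Hs]]]].
      exists a, b, y, T; rewrite retime_cur.
      split; [rewrite scheduled_agree with (L := L) (n := n) by (assumption || lia); exact Hs|].
      intros _; destruct Hs as [HN [_ [_ [HcT _]]]].
      destruct (Nat.eq_dec (S c') T) as [<-|]; [|left; lia].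
      right; split; [reflexivity|apply in_next_label, HN].
    + destruct (Hsched z ltac:(lia) HPz Hev) as [a [b [y [T [Hs Hdue]]]]].
      exists a, b, y, T; rewrite retime_lt by lia.
      split; [rewrite scheduled_agree with (L := L) (n := n) by (assumption || lia); exact Hs|].
      intros Hopen.
      assert (Hopen' : forall w, z < w <= n -> ~ In b (L w))
        by (intros w Hw; rewrite <- agree by lia; apply Hopen; lia).
      destruct (Hdue Hopen') as [Hlt|[_ Hu]]; [|exfalso; exact (poised_not_Until _ a b HP Hu)].
      specialize (Hbefore z a b y T ltac:(lia) Hs Hopen' Hlt).
      destruct (Nat.eq_dec (S c') T) as [<-|]; [|left; lia].
      right; split; [reflexivity|apply in_next_label, pending_poised; [exact HP|]].
      exact (scheduled_open_pending L C n z (C z) a b y (S c') HI ltac:(lia) Hs Hopen').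
Qed.

Lemma nodeL_last anc G : nodeL anc G (length anc) = G.
Proof. unfold nodeL; rewrite app_nth2, Nat.sub_diag by lia; reflexivity. Qed.

Lemma nodeL_snoc anc G G' i : i <= length anc -> nodeL (anc ++ [G]) G' i = nodeL anc G i.
Proof. intro Hi; unfold nodeL; rewrite app_nth1; [reflexivity|rewrite length_app; simpl; lia]. Qed.

Lemma nodeL_snoc_last anc G G' : nodeL (anc ++ [G]) G' (S (length anc)) = G'.
Proof.
  replace (S (length anc)) with (length (anc ++ [G])) by (rewrite length_app; simpl; lia).
  apply nodeL_last.
Qed.

Lemma valid_has_ticked_leaf anc t : valid anc t ->
  forall C, branch_inv (nodeL anc (tlabel t)) C (length anc) -> has_ticked_leaf t.
Proof.
  intro HV; induction HV as [anc G|anc G HR|anc G cs HR Hcs IH|anc G|anc G HP Hnl Hpr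
    |anc G HP Hnl Hpr Hpr0|anc G c HP Hnl Hpr Hpr0 Hc HVc IH];
    intros C HI; simpl in HI.
  - constructor.
  - exfalso; apply (static_cross_unsat (C (length anc)) G HR).
    rewrite <- (nodeL_last anc G); exact (inv_holds _ _ _ HI).
  - rewrite <- (nodeL_last anc G) in HR.
    destruct (branch_inv_static _ C _ _ HI HR) as [l [Hl Hnext]].
    apply in_map_iff in Hl; destruct Hl as [c [Hc Hin]].
    apply htl_inner with c; [exact Hin|apply (IH c Hin (retime C (length anc) (C (length anc))
      (C (length anc))))].
    rewrite length_app, Nat.add_1_r, Hc.
    apply Hnext; [intros i Hi; apply nodeL_snoc, Hi|apply nodeL_snoc_last].
  - constructor.
  - exfalso; apply (branch_inv_not_prunes _ C _ HI); unfold prunes; rewrite nodeL_last; exact Hpr.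
  - exfalso; apply (branch_inv_not_prunes0 _ C _ HI); unfold prunes0; rewrite nodeL_last; exact Hpr0.
  - rewrite <- (nodeL_last anc G) in HP, Hc.
    destruct (branch_inv_transition _ C _ (nodeL (anc ++ [G]) (tlabel c)) HI HP) as [C' HI'].
    + unfold loops_back; rewrite nodeL_last; exact Hnl.
    + intros i Hi; apply nodeL_snoc, Hi.
    + rewrite nodeL_snoc_last; exact Hc.
    + apply htl_inner with c; [left; reflexivity|apply (IH C')].
      rewrite length_app, Nat.add_1_r; exact HI'.
Qed.

End Model.

Theorem mainTheorem1 (phi : form) :
  satisfiable phi ->
  forall t : tableau, finished_tableau phi t -> successful t.
Proof.
  intros [St [R [g [sigma [_ [_ [_ Hsat]]]]]]] t [HV Hroot].
  apply (valid_has_ticked_leaf St g sigma [] t HV (fun _ => 0)).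
  rewrite Hroot; split; simpl; try (intros; lia).
  intros f [<-|[]]; unfold holds; rewrite (sat_ext g phi _ sigma); [exact Hsat|reflexivity].
Qed.
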